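(* Let $G$ and $H$ be convergence groups with $G$ $g$-barrelled, and let $L$ be a locally quasi-convex topological group. Then every separately continuous bihomomorphism $u:G\times H\to L$ is jointly continuous in each of the following cases: (i) $H$ is locally compact; (ii) $G$ and $H$ are first countable.
   Context: All groups are abelian. A convergence structure on a set $X$ assigns to each $x$ a collection of filters converging to $x$. This assignment must satisfy three conditions: point ultrafilters converge to their point; finite intersections of filters converging to $x$ converge to $x$; and finer filters of convergent filters converge. A map is continuous if it sends filters converging to $x$ to filters converging to the image of $x$. A convergence group is an abelian group with a convergence structure such that $\mathcal F\to x$, $\mathcal G\to y$ imply $\mathcal F-\mathcal G\to x-y$. Topological groups are convergence groups. $G\times H$ carries the product convergence structure, in which a filter converges iff its projections converge. A convergence space is Hausdorff if limits are unique. A subset $K$ is compact if every ultrafilter containing $K$ converges to a point of $K$. A convergence space is locally compact if it is Hausdorff and each convergent filter contains a compact set. A convergence space is first countable if for every filter $\mathcal F\to x$ there is a filter $\mathcal V\subseteq\mathcal F$ with a countable base such that $\mathcal V\to x$. $\mathbb T=\mathbb R/\mathbb Z$, $\mathbb T_+=\rho([-1/4,1/4])$ where $\rho:\mathbb R\to\mathbb T$ is the quotient map. $\Gamma G$ is the group of continuous homomorphisms $G\to\mathbb T$, and $\Gamma_s G$ is $\Gamma G$ with the topology of pointwise convergence. A set $M\subseteq\Gamma G$ is equicontinuous if for every filter $\mathcal F\to0$ in $G$, the filter generated by $\{\varphi(x):\varphi\in M,x\in F\}$, $F\in\mathcal F$, converges to $0$. $G$ is $g$-barrelled if every compact subset of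 $\Gamma_s G$ is equicontinuous. A subset $A$ of a topological group $L$ is quasi-convex if for every $x\notin A$ there is a continuous character $\varphi$ with $\varphi(A)\subseteq\mathbb T_+$, $\varphi(x)\notin\mathbb T_+$. $L$ is locally quasi-convex if it has a zero neighbourhood base of quasi-convex sets. A bihomomorphism is a map that is a homomorphism in each variable. It is separately continuous if it is continuous in each variable separately. *)

From Stdlib Require Import Reals.
From mathcomp Require Import all_boot all_algebra.
Set Implicit Arguments. Unset Strict Implicit. Unset Printing Implicit Defensive.
Import GRing.Theory.

Definition set (X : Type) := X -> Prop.

Definition is_filter {X : Type} (F : set (set X)) : Prop :=
  F (fun _ => True) /\ ~ F (fun _ => False) /\
  (forall A B, F A -> F B -> F (fun x => A x /\ B x)) /\
  (forall A B : set X, (forall x, A x -> B x) -> F A -> F B).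

Definition is_ultrafilter {X : Type} (U : set (set X)) : Prop :=
  is_filter U /\ forall A : set X, U A \/ U (fun x => ~ A x).

Definition point_filter {X : Type} (x : X) : set (set X) := fun A => A x.

Definition filter_inter {X : Type} (F G : set (set X)) : set (set X) :=
  fun A => F A /\ G A.

Definition finer {X : Type} (F G : set (set X)) : Prop := forall A, F A -> G A.

(* image filter f(F) (generated by the f(A), A in F) *)
Definition fmap {X Y : Type} (f : X -> Y) (F : set (set X)) : set (set Y) :=
  fun B => F (fun x => B (f x)).

Definition has_countable_base {X : Type} (V : set (set X)) : Prop :=
  exists B : nat -> set X, (forall n, V (B n)) /\
    forall A, V A -> exists n, forall x, B n x -> A x.

Definition convergence (X : Type) := set (set X) -> X -> Prop.

Definition is_convergence {X : Type} (c : convergence X) : Prop :=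
  (forall F x, c F x -> is_filter F) /\
  (forall x, c (point_filter x) x) /\
  (forall F G x, c F x -> c G x -> c (filter_inter F G) x) /\
  (forall F G x, is_filter G -> finer F G -> c F x -> c G x).

Definition continuous {X Y : Type} (cX : convergence X) (cY : convergence Y)
  (f : X -> Y) : Prop :=
  forall F x, cX F x -> cY (fmap f F) (f x).

Definition hausdorff {X : Type} (c : convergence X) : Prop :=
  forall F x y, c F x -> c F y -> x = y.

Definition compact_in {X : Type} (c : convergence X) (K : set X) : Prop :=
  forall U, is_ultrafilter U -> U K -> exists x, K x /\ c U x.

Definition locally_compact {X : Type} (c : convergence X) : Prop :=
  hausdorff c /\ forall F x, c F x -> exists K, compact_in c K /\ F K.

Definition first_countable {X : Type} (c : convergence X) : Prop :=
  forall F x, c F x -> exists V, is_filter V /\ finer V F /\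
    has_countable_base V /\ c V x.

Definition prod_conv {X Y : Type} (cX : convergence X) (cY : convergence Y)
  : convergence (X * Y) :=
  fun F p => is_filter F /\ cX (fmap fst F) p.1 /\ cY (fmap snd F) p.2.

Local Open Scope ring_scope.

Definition filter_sub {G : zmodType} (F H : set (set G)) : set (set G) :=
  fun C => exists A B, F A /\ H B /\ forall a b, A a -> B b -> C (a - b).

Definition is_conv_group {G : zmodType} (c : convergence G) : Prop :=
  is_convergence c /\
  forall F H x y, c F x -> c H y -> c (filter_sub F H) (x - y).

Local Close Scope ring_scope.
Local Open Scope R_scope.

(* T represented by the representatives in [0,1) *)
Definition T : Type := {r : R | r >= 0 /\ r < 1}.

Definition rho (r : R) : T := exist _ (frac_part r) (base_fp r).

Definition T0 : T := rho 0.
Definition Tadd (a b : T) : T := rho (proj1_sig a + proj1_sig b).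

Definition tdist (a b : T) : R :=
  let d := Rabs (proj1_sig a - proj1_sig b) in Rmin d (1 - d).

Definition Tconv : convergence T :=
  fun F t => is_filter F /\ forall eps, 0 < eps -> F (fun s => tdist s t < eps).

Definition Tplus (t : T) : Prop :=
  exists r, - (1/4) <= r <= 1/4 /\ rho r = t.

Local Close Scope R_scope.
Local Open Scope ring_scope.

Definition is_hom_T {G : zmodType} (phi : G -> T) : Prop :=
  forall x y, phi (x + y) = Tadd (phi x) (phi y).

Definition in_Gamma {G : zmodType} (c : convergence G) (phi : G -> T) : Prop :=
  is_hom_T phi /\ continuous c Tconv phi.

Definition pointwise_conv {G : zmodType} : convergence (G -> T) :=
  fun U phi => is_filter U /\ forall x, Tconv (fmap (fun psi => psi x) U) (phi x).

Definition compact_Gamma_s {G : zmodType} (c : convergence G) (M : set (G -> T)) : Prop :=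
  (forall phi, M phi -> in_Gamma c phi) /\ compact_in pointwise_conv M.

Definition equicontinuous {G : zmodType} (c : convergence G) (M : set (G -> T)) : Prop :=
  forall F, c F 0 ->
    (* the filter generated by the sets {phi x | phi in M, x in A}, A in F,
       converges to 0 in T: every basic 0-neighbourhood of T contains such a set *)
    forall eps : R, Rlt 0 eps ->
      exists A, F A /\ forall phi x, M phi -> A x -> Rlt (tdist (phi x) T0) eps.

Definition g_barrelled {G : zmodType} (c : convergence G) : Prop :=
  forall M, compact_Gamma_s c M -> equicontinuous c M.

Definition is_topology {X : Type} (op : set (set X)) : Prop :=
  op (fun _ => True) /\
  (forall U V, op U -> op V -> op (fun x => U x /\ V x)) /\
  (forall (I : Type) (Uf : I -> set X), (forall i, op (Uf i)) ->
      op (fun x => exists i, Uf i x)).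

Definition is_top_group {L : zmodType} (op : set (set L)) : Prop :=
  is_topology op /\
  forall x y U, op U -> U (x - y) ->
    exists V W, op V /\ op W /\ V x /\ W y /\
      forall a b, V a -> W b -> U (a - b).

Definition top_conv {X : Type} (op : set (set X)) : convergence X :=
  fun F x => is_filter F /\ forall U, op U -> U x -> F U.

Definition nbhd {X : Type} (op : set (set X)) (x : X) (A : set X) : Prop :=
  exists U, op U /\ U x /\ forall y, U y -> A y.

Definition quasi_convex {L : zmodType} (op : set (set L)) (A : set L) : Prop :=
  forall x, ~ A x -> exists phi : L -> T,
    is_hom_T phi /\ continuous (top_conv op) Tconv phi /\
    (forall a, A a -> Tplus (phi a)) /\ ~ Tplus (phi x).

Definition locally_quasi_convex {L : zmodType} (op : set (set L)) : Prop :=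
  forall U, nbhd op 0 U -> exists V, nbhd op 0 V /\ quasi_convex op V /\
    forall y, V y -> U y.

Definition bihom {G H L : zmodType} (u : G * H -> L) : Prop :=
  (forall x1 x2 y, u (x1 + x2, y) = u (x1, y) + u (x2, y)) /\
  (forall x y1 y2, u (x, y1 + y2) = u (x, y1) + u (x, y2)).

Definition sep_continuous {G H L : zmodType} (cG : convergence G) (cH : convergence H)
  (cL : convergence L) (u : G * H -> L) : Prop :=
  (forall x, continuous cH cL (fun y => u (x, y))) /\
  (forall y, continuous cG cL (fun x => u (x, y))).

(* Plan.  (1) Elementary metric facts on the circle T = R/Z, chiefly that
   doubling doubles the distance to 0 on T_+ and that T is compact.
   (2) For a 0-neighbourhood V of L, its polar (characters mapping V into T_+)
   is equicontinuous (points w with 2^k w in V for k <= n are sent near 0),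
   hence consists of continuous characters, and is pointwise compact.
   (3) For K compact in H, the characters x |-> chi (u (x, b)), chi in the
   polar, b in K, form a compact subset of Gamma_s G; g-barrelledness makes
   them equicontinuous, so u maps A x K into V for A in any F -> 0, whenever
   V is quasi-convex (uniform_on_compact).
   (4) A convergence-space argument turns this into a box A x B inside
   u^-1 (V): directly in the locally compact case, and via a compact
   convergent sequence in the first countable case.  This gives continuity
   at (0, 0), which the bihomomorphism identity spreads to every point. *)

From Stdlib Require Import Reals Lra Lia ZArith ClassicalEpsilon Classical ProofIrrelevance.
From mathcomp Require Import all_boot all_algebra.

Set Implicit Arguments. Unset Strict Implicit.
(* mathcomp rebinds %Z to its integers; integer literals below are Stdlib's Z. *)
Delimit Scope Z_scope with Z.
Local Open Scope R_scope.

Definition val (t : T) : R := proj1_sig t.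

Lemma val_range (t : T) : 0 <= val t < 1.
Proof. destruct t as [v [h0 h1]]; simpl; lra. Qed.

Lemma T_eq (a b : T) : val a = val b -> a = b.
Proof. destruct a, b; simpl; intros; subst; apply subset_eq_compat; reflexivity. Qed.

Lemma val_rho_eq (r : R) (z : Z) : 0 <= r - IZR z < 1 -> val (rho r) = r - IZR z.
Proof.
  intros H. unfold val, rho, frac_part; simpl. destruct (base_Int_part r) as [h1 h2].
  assert (A : (Int_part r < z + 1)%Z) by (apply lt_IZR; rewrite plus_IZR; simpl; lra).
  assert (B : (z < Int_part r + 1)%Z) by (apply lt_IZR; rewrite plus_IZR; simpl; lra).
  replace (Int_part r) with z by lia. reflexivity.
Qed.

Lemma val_rho (r : R) : exists z, val (rho r) = r - IZR z.
Proof. exists (Int_part r). reflexivity. Qed.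

Lemma rho_val (t : T) : rho (val t) = t.
Proof.
  apply T_eq. rewrite (val_rho_eq (z := 0)); pose proof (val_range t); simpl; lra.
Qed.

Lemma rho_shift (r : R) (z : Z) : rho (r + IZR z) = rho r.
Proof.
  apply T_eq. destruct (val_rho r) as [k Hk]. rewrite Hk (val_rho_eq (z := k + z)).
  - rewrite plus_IZR; ring.
  - rewrite plus_IZR. pose proof (val_range (rho r)). lra.
Qed.

Lemma Tadd_rho (r s : R) : Tadd (rho r) (rho s) = rho (r + s).
Proof.
  unfold Tadd. fold (val (rho r)) (val (rho s)).
  destruct (val_rho r) as [z1 ->]; destruct (val_rho s) as [z2 ->].
  rewrite -(rho_shift (r + s) (- (z1 + z2))) opp_IZR plus_IZR. f_equal. ring.
Qed.

Lemma val_T0 : val T0 = 0.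
Proof. unfold T0. rewrite (val_rho_eq (z := 0)); simpl; lra. Qed.

Lemma Tadd_T0 (t : T) : Tadd T0 t = t.
Proof. rewrite -(rho_val t) /T0 Tadd_rho Rplus_0_l. reflexivity. Qed.

Lemma td_le (a b : T) (z : Z) : tdist a b <= Rabs (val a - val b - IZR z).
Proof.
  unfold tdist. fold (val a) (val b). pose proof (val_range a); pose proof (val_range b).
  destruct (Z.lt_trichotomy z 0) as [Hz|[->|Hz]].
  - assert (IZR z <= -1) by (apply (IZR_le z (-1)); lia).
    eapply Rle_trans; [apply Rmin_r|].
    unfold Rabs; do 2 destruct Rcase_abs; lra.
  - rewrite Rminus_0_r. apply Rmin_l.
  - assert (1 <= IZR z) by (apply (IZR_le 1 z); lia).
    eapply Rle_trans; [apply Rmin_r|].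
    unfold Rabs; do 2 destruct Rcase_abs; lra.
Qed.

Lemma td_eq (a b : T) : exists z, tdist a b = Rabs (val a - val b - IZR z).
Proof.
  unfold tdist. fold (val a) (val b). pose proof (val_range a); pose proof (val_range b).
  unfold Rmin; destruct Rle_dec.
  - exists 0%Z. rewrite Rminus_0_r. reflexivity.
  - destruct (Rcase_abs (val a - val b)); [exists (-1)%Z | exists 1%Z]; simpl;
      unfold Rabs in *; do 2 destruct Rcase_abs; lra.
Qed.

Lemma td_nonneg (a b : T) : 0 <= tdist a b.
Proof.
  destruct (td_eq a b) as [z ->]. apply Rabs_pos.
Qed.

Lemma td_sym (a b : T) : tdist a b = tdist b a.
Proof. unfold tdist. rewrite (Rabs_minus_sym (proj1_sig a)). reflexivity. Qed.

Lemma td_self (a : T) : tdist a a = 0.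
Proof.
  apply Rle_antisym; [|apply td_nonneg]. eapply Rle_trans; [apply (td_le a a 0)|].
  rewrite /= Rminus_0_r Rminus_diag Rabs_R0. lra.
Qed.

Lemma td_zero (a b : T) : tdist a b = 0 -> a = b.
Proof.
  unfold tdist. fold (val a) (val b). intros H. apply T_eq.
  pose proof (val_range a); pose proof (val_range b).
  revert H. unfold Rmin; destruct Rle_dec; unfold Rabs in *; destruct Rcase_abs; lra.
Qed.

Lemma td_tri (a b c : T) : tdist a c <= tdist a b + tdist b c.
Proof.
  destruct (td_eq a b) as [z1 ->]; destruct (td_eq b c) as [z2 ->].
  eapply Rle_trans; [apply (td_le a c (z1 + z2))|]. rewrite plus_IZR.
  replace (val a - val c - (IZR z1 + IZR z2))
    with ((val a - val b - IZR z1) + (val b - val c - IZR z2)) by ring.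
  apply Rabs_triang.
Qed.

Lemma td_rho (r s : R) : tdist (rho r) (rho s) <= Rabs (r - s).
Proof.
  destruct (val_rho r) as [z1 H1]; destruct (val_rho s) as [z2 H2].
  eapply Rle_trans; [apply (td_le _ _ (z2 - z1))|]. rewrite H1 H2 minus_IZR.
  right. f_equal. ring.
Qed.

Lemma Tadd_cont (a b a' b' : T) : tdist (Tadd a b) (Tadd a' b') <= tdist a a' + tdist b b'.
Proof.
  rewrite -(rho_val a) -(rho_val b) -(rho_val a') -(rho_val b') !Tadd_rho.
  destruct (td_eq (rho (val a)) (rho (val a'))) as [z1 ->].
  destruct (td_eq (rho (val b)) (rho (val b'))) as [z2 ->].
  rewrite -(rho_shift (val a' + val b') (z1 + z2)).
  eapply Rle_trans; [apply td_rho|]. rewrite !rho_val plus_IZR.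
  replace (val a + val b - (val a' + val b' + (IZR z1 + IZR z2)))
    with ((val a - val a' - IZR z1) + (val b - val b' - IZR z2)) by ring.
  apply Rabs_triang.
Qed.

Lemma Tadd_tri (a b c : T) : tdist (Tadd a b) c <= tdist a T0 + tdist b c.
Proof.
  pose proof (Tadd_cont a b T0 c) as H. rewrite Tadd_T0 in H. exact H.
Qed.

Lemma Rabs_int_shift (r : R) (k : Z) : Rabs r <= 1/2 -> Rabs r <= Rabs (r - IZR k).
Proof.
  intros Hr. destruct (Z.eq_dec k 0) as [->|Hk]; [rewrite Rminus_0_r; lra|].
  assert (1 <= Rabs (IZR k)).
  { destruct (Z.lt_trichotomy k 0) as [h|[h|h]]; [|contradiction|].
    - assert (IZR k <= -1) by (apply (IZR_le k (-1)); lia). unfold Rabs; destruct Rcase_abs; lra.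
    - assert (1 <= IZR k) by (apply (IZR_le 1 k); lia). unfold Rabs; destruct Rcase_abs; lra. }
  pose proof (Rabs_triang_inv (IZR k) r). rewrite Rabs_minus_sym in H0. lra.
Qed.

Lemma td_rho0 (r : R) : Rabs r <= 1/2 -> tdist (rho r) T0 = Rabs r.
Proof.
  intros Hr. apply Rle_antisym.
  - unfold T0. eapply Rle_trans; [apply td_rho|]. rewrite Rminus_0_r. lra.
  - destruct (td_eq (rho r) T0) as [z ->]. destruct (val_rho r) as [k ->].
    rewrite val_T0 Rminus_0_r -Rminus_plus_distr -plus_IZR. apply Rabs_int_shift, Hr.
Qed.

Lemma Tplus_iff (t : T) : Tplus t <-> tdist t T0 <= 1/4.
Proof.
  split.
  - intros [r [Hr <-]]. rewrite td_rho0; unfold Rabs; destruct Rcase_abs; lra.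
  - intros H. destruct (td_eq t T0) as [z Hz]. rewrite Hz val_T0 Rminus_0_r in H.
    exists (val t - IZR z). split.
    + unfold Rabs in H; destruct Rcase_abs; lra.
    + rewrite -(rho_shift _ z) Rplus_comm Rplus_minus. apply rho_val.
Qed.

Lemma td_double (t : T) : tdist t T0 <= 1/4 -> tdist (Tadd t t) T0 = 2 * tdist t T0.
Proof.
  move=> /Tplus_iff [r [Hr <-]]. rewrite Tadd_rho !td_rho0.
  - replace (r + r) with (2 * r) by ring. rewrite Rabs_mult (Rabs_right 2); lra.
  - unfold Rabs; destruct Rcase_abs; lra.
  - unfold Rabs; destruct Rcase_abs; lra.
Qed.

Lemma filter_true {X : Type} (F : set (set X)) : is_filter F -> F (fun _ => True).
Proof. intros [H _]. exact H. Qed.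

Lemma filter_and {X : Type} (F : set (set X)) (A B : set X) :
  is_filter F -> F A -> F B -> F (fun x => A x /\ B x).
Proof. intros [_ [_ [H _]]]. apply H. Qed.

Lemma filter_mono {X : Type} (F : set (set X)) (A B : set X) :
  is_filter F -> F A -> (forall x, A x -> B x) -> F B.
Proof. intros [_ [_ [_ H]]] HA HAB. exact (H A B HAB HA). Qed.

Lemma filter_ne {X : Type} (F : set (set X)) (A : set X) :
  is_filter F -> F A -> exists x, A x.
Proof.
  intros HF HA. apply NNPP. intros N. apply (proj1 (proj2 HF)).
  apply (filter_mono HF HA). intros x Ax. apply N. exists x. exact Ax.
Qed.

Lemma fmap_filter {X Y : Type} (f : X -> Y) (F : set (set X)) :
  is_filter F -> is_filter (fmap f F).
Proof.
  intros [H1 [H2 [H3 H4]]]. unfold fmap. repeat split; auto.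
  intros A B HAB. apply H4. intros x. apply HAB.
Qed.

Lemma fmap_ultra {X Y : Type} (f : X -> Y) (U : set (set X)) :
  is_ultrafilter U -> is_ultrafilter (fmap f U).
Proof.
  intros [HF HU]. split; [apply fmap_filter, HF|]. intros A. apply (HU (fun x => A (f x))).
Qed.

(* T is compact: an ultrafilter converges to rho c, where c is the supremum
   of the r <= 1 such that {t | val t < r} is not in the ultrafilter. *)
Lemma T_compact (U : set (set T)) : is_ultrafilter U -> exists t, Tconv U t.
Proof.
  intros [HF HU].
  set (E := fun r => r <= 1 /\ ~ U (fun t => val t < r)).
  assert (E0 : E 0).
  { split; [lra|]. intros H. destruct (filter_ne HF H) as [t Ht].
    pose proof (val_range t); lra. }
  destruct (completeness E (ex_intro (fun m => is_upper_bound E m) 1 (fun r h => proj1 h)) (ex_intro _ 0 E0))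
    as [c [Hub Hlub]].
  assert (Lo : forall eps, 0 < eps -> U (fun t => c - eps <= val t)).
  { intros eps He.
    assert (NB : ~ is_upper_bound E (c - eps)) by (intros Hb; specialize (Hlub _ Hb); lra).
    apply not_all_ex_not in NB. destruct NB as [r Hr].
    apply imply_to_and in Hr. destruct Hr as [[Er1 Er2] Hr].
    destruct (HU (fun t => val t < c - eps)) as [h|h].
    - exfalso. apply Er2. apply (filter_mono HF h). intros t Ht. lra.
    - apply (filter_mono HF h). intros t Ht. lra. }
  assert (Hi : forall eps, 0 < eps -> U (fun t => val t < c + eps)).
  { intros eps He. destruct (Rle_dec (c + eps) 1) as [h|h].
    - apply NNPP. intros N. specialize (Hub (c + eps) (conj h N)). lra.
    - apply (filter_mono HF (filter_true HF)). intros t _. pose proof (val_range t). lra. }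
  exists (rho c). split; [exact HF|]. intros eps He.
  apply (filter_mono HF (filter_and HF (Lo (eps/2) ltac:(lra)) (Hi (eps/2) ltac:(lra)))).
  intros s [h1 h2]. rewrite -(rho_val s). eapply Rle_lt_trans; [apply td_rho|].
  unfold Rabs; destruct Rcase_abs; lra.
Qed.

Lemma Tconv_unique (F : set (set T)) (a b : T) : Tconv F a -> Tconv F b -> a = b.
Proof.
  intros [HF Ha] [_ Hb]. apply td_zero.
  destruct (Rle_lt_or_eq_dec 0 (tdist a b) (td_nonneg a b)) as [h|h]; [|symmetry; exact h].
  set (e := tdist a b / 2).
  destruct (filter_ne HF (filter_and HF (Ha e ltac:(unfold e; lra)) (Hb e ltac:(unfold e; lra))))
    as [s [s1 s2]].
  pose proof (td_tri a s b). rewrite (td_sym a s) in H. unfold e in *. lra.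
Qed.

Local Close Scope R_scope.
Import GRing.Theory.
Local Open Scope ring_scope.

Lemma nbhd_open {X : Type} (op : set (set X)) (U : set X) x : op U -> U x -> nbhd op x U.
Proof. intros. exists U. auto. Qed.

Lemma nbhd_and {L : zmodType} (op : set (set L)) x (A B : set L) : is_top_group op ->
  nbhd op x A -> nbhd op x B -> nbhd op x (fun y => A y /\ B y).
Proof.
  intros [[_ [Hi _]] _] [U [oU [Ux HU]]] [U' [oU' [U'x HU']]].
  exists (fun y => U y /\ U' y). split; [apply Hi; assumption|]. split; [auto|].
  intros y [a b]; auto.
Qed.

Lemma conv_nbhd {X : Type} (op : set (set X)) F x A : top_conv op F x -> nbhd op x A -> F A.
Proof. intros [HF H] [U [oU [Ux HU]]]. exact (filter_mono HF (H U oU Ux) HU). Qed.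

Lemma sub_nbhds {L : zmodType} (op : set (set L)) (W : set L) z : is_top_group op ->
  nbhd op 0 W -> exists V V', op V /\ op V' /\ V z /\ V' z /\
    forall a b, V a -> V' b -> W (a - b).
Proof.
  intros [_ Hs] [U [oU [U0 HU]]]. rewrite -(subrr z) in U0.
  destruct (Hs z z U oU U0) as [V [V' [oV [oV' [Vz [V'z HVV']]]]]].
  exists V, V'. repeat split; auto.
Qed.

Lemma nbhd_trans {L : zmodType} (op : set (set L)) (W : set L) z : is_top_group op ->
  nbhd op 0 W -> nbhd op z (fun l => W (l - z)).
Proof.
  intros Htg HW. destruct (sub_nbhds z Htg HW) as [V [V' [oV [_ [Vz [V'z HVV']]]]]].
  exists V. repeat split; auto.
Qed.

Lemma nbhd_neg0 {L : zmodType} (op : set (set L)) (A : set L) : is_top_group op ->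
  nbhd op 0 A -> nbhd op 0 (fun w => A (- w)).
Proof.
  intros Htg HA. destruct (sub_nbhds 0 Htg HA) as [V [V' [_ [oV' [V0 [V'0 HVV']]]]]].
  exists V'. repeat split; auto. intros y V'y. rewrite -sub0r. auto.
Qed.

Lemma nbhd_dbl {L : zmodType} (op : set (set L)) (A : set L) : is_top_group op ->
  nbhd op 0 A -> nbhd op 0 (fun w => A (w + w)).
Proof.
  intros Htg HA. destruct (sub_nbhds 0 Htg HA) as [V [V' [oV [oV' [V0 [V'0 HVV']]]]]].
  destruct (nbhd_and Htg (nbhd_open oV V0) (nbhd_neg0 Htg (nbhd_open oV' V'0)))
    as [U [oU [U0 HU]]].
  exists U. repeat split; auto. intros y Uy. destruct (HU y Uy) as [Vy V'y].
  rewrite -{2}(opprK y). auto.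
Qed.

Lemma add_conv {L : zmodType} {X : Type} (op : set (set L)) (F : set (set X)) f g a b :
  is_top_group op -> is_filter F -> top_conv op (fmap f F) a -> top_conv op (fmap g F) b ->
  top_conv op (fmap (fun q => f q + g q) F) (a + b).
Proof.
  intros [Ht Hs] HF [_ Hf] [_ Hg]. split; [apply fmap_filter, HF|].
  intros U oU Uab. rewrite -(opprK b) in Uab.
  destruct (Hs a (- b) U oU Uab) as [V [W [oV [oW [Va [Wb HVW]]]]]].
  rewrite -sub0r in Wb.
  destruct (Hs 0 b W oW Wb) as [V1 [W1 [oV1 [oW1 [V10 [W1b HV1W1]]]]]].
  apply (filter_mono HF (filter_and HF (Hf V oV Va) (Hg W1 oW1 W1b))).
  intros q [h1 h2]. rewrite -(opprK (g q)). apply HVW; [exact h1|].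
  rewrite -sub0r. auto.
Qed.

Lemma const_conv {L : zmodType} {X : Type} (op : set (set L)) (F : set (set X)) c :
  is_filter F -> top_conv op (fmap (fun _ => c) F) c.
Proof.
  intros HF. split; [apply fmap_filter, HF|]. intros U _ Uc.
  apply (filter_mono HF (filter_true HF)). auto.
Qed.

Lemma conv_ext {L : zmodType} {X : Type} (op : set (set L)) (F : set (set X)) f g a :
  is_filter F -> (forall q, f q = g q) -> top_conv op (fmap f F) a -> top_conv op (fmap g F) a.
Proof.
  intros HF E [_ H]. split; [apply fmap_filter, HF|]. intros U oU Ua.
  apply (filter_mono HF (H U oU Ua)). intros q. rewrite E. auto.
Qed.

(* The polar of V: homomorphisms L -> T mapping V into T_+. *)
Definition polar {L : zmodType} (V : set L) (chi : L -> T) : Prop :=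
  is_hom_T chi /\ forall v, V v -> Tplus (chi v).

Fixpoint doubling_set {L : zmodType} (A : set L) (n : nat) : set L :=
  match n with
  | O => A
  | S k => fun w => A w /\ doubling_set A k (w + w)
  end.

Lemma doubling_set_nbhd {L : zmodType} (op : set (set L)) (A : set L) n :
  is_top_group op -> nbhd op 0 A -> nbhd op 0 (doubling_set A n).
Proof.
  intros Htg. elim: n A => [|n IH] A HA; [exact HA|].
  apply (nbhd_and Htg HA). apply (nbhd_dbl Htg), IH, HA.
Qed.

(* On doubling_set V k, a character of the polar of V takes values within
   1/4 * 2^-k of 0, because doubling doubles the distance to 0 on T_+. *)
Lemma polar_doubling_bound {L : zmodType} (V : set L) (chi : L -> T) k w :
  polar V chi -> doubling_set V k w -> Rle (tdist (chi w) T0) (Rmult (/4) (pow (/2) k)).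
Proof.
  intros [Hh HV]. elim: k w => [|k IH] w Hw.
  - pose proof (proj1 (Tplus_iff _) (HV w Hw)). simpl. lra.
  - destruct Hw as [Vw Dw]. specialize (IH _ Dw). rewrite Hh td_double in IH.
    + simpl. lra.
    + exact (proj1 (Tplus_iff _) (HV w Vw)).
Qed.

Lemma polar_equicontinuous {L : zmodType} (op : set (set L)) (V : set L) (eps : R) :
  is_top_group op -> nbhd op 0 V -> Rlt 0 eps -> exists W, nbhd op 0 W /\
    forall chi w, polar V chi -> W w -> Rlt (tdist (chi w) T0) eps.
Proof.
  intros Htg HV He.
  destruct (pow_lt_1_zero (/2) ltac:(rewrite Rabs_right; lra) eps He) as [N HN].
  specialize (HN N (le_n N)). rewrite Rabs_right in HN; [|left; apply pow_lt; lra].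
  exists (doubling_set V N). split; [exact: doubling_set_nbhd|].
  intros chi w Hc Hw. pose proof (polar_doubling_bound Hc Hw).
  pose proof (pow_lt (/2) N ltac:(lra)). lra.
Qed.

(* Equicontinuity makes evaluation jointly continuous on polar V x L:
   if chi_p -> chi0 pointwise and l_p -> l0, then chi_p (l_p) -> chi0 (l0). *)
Lemma polar_eval_conv {L : zmodType} {X : Type} (op : set (set L)) (V : set L)
  (F : set (set X)) (c : X -> L -> T) (chi0 : L -> T) (l : X -> L) (l0 : L) :
  is_top_group op -> nbhd op 0 V -> is_filter F -> F (fun p => polar V (c p)) ->
  pointwise_conv (fmap c F) chi0 -> top_conv op (fmap l F) l0 ->
  Tconv (fmap (fun p => c p (l p)) F) (chi0 l0).
Proof.
  intros Htg HV HF HP [_ Hc] Hl. split; [apply fmap_filter, HF|]. intros eps He.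
  destruct (polar_equicontinuous (eps := Rdiv eps 2) Htg HV ltac:(lra)) as [W [HW HWsmall]].
  have Hclose : F (fun p => W (l p - l0)) := conv_nbhd Hl (nbhd_trans l0 Htg HW).
  have Hpt : F (fun p => Rlt (tdist (c p l0) (chi0 l0)) (Rdiv eps 2)).
  { exact (proj2 (Hc l0) (Rdiv eps 2) ltac:(lra)). }
  apply (filter_mono HF (filter_and HF HP (filter_and HF Hclose Hpt))).
  intros p [[Hh Hpol] [h1 h2]]. rewrite -(subrK l0 (l p)) Hh.
  eapply Rle_lt_trans; [apply Tadd_tri|].
  pose proof (HWsmall _ _ (conj Hh Hpol) h1). lra.
Qed.

Lemma polar_continuous {L : zmodType} (op : set (set L)) (V : set L) (chi : L -> T) :
  is_top_group op -> nbhd op 0 V -> polar V chi -> continuous (top_conv op) Tconv chi.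
Proof.
  intros Htg HV Hc F z Hz. pose proof (proj1 Hz) as HF.
  apply: (polar_eval_conv (c := fun _ => chi) Htg HV HF _ _ Hz).
  - exact (filter_mono HF (filter_true HF) (fun _ _ => Hc)).
  - split; [apply fmap_filter, HF|]. intros x. split; [apply fmap_filter, fmap_filter, HF|].
    intros eps He. apply (filter_mono HF (filter_true HF)). intros _ _. rewrite td_self. exact He.
Qed.

(* Alaoglu-Bourbaki for T: the polar of any set is compact for pointwise
   convergence, the limit of an ultrafilter being its coordinatewise limit. *)
Lemma polar_compact {L : zmodType} (V : set L) : compact_in pointwise_conv (polar V).
Proof.
  intros U HU HP. pose proof (proj1 HU) as HF.
  set (chi0 := fun l => epsilon (inhabits T0) (Tconv (fmap (fun chi : L -> T => chi l) U))).
  assert (Hc : forall l, Tconv (fmap (fun chi : L -> T => chi l) U) (chi0 l)).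
  { intros l. apply epsilon_spec, T_compact, fmap_ultra, HU. }
  exists chi0. split; [|split; [exact HF| exact Hc]]. split.
  - intros x y. apply (Tconv_unique (Hc (x + y))).
    split; [apply fmap_filter, HF|]. intros eps He.
    apply (filter_mono HF (filter_and HF HP (filter_and HF
      (proj2 (Hc x) (Rdiv eps 2) ltac:(lra)) (proj2 (Hc y) (Rdiv eps 2) ltac:(lra))))).
    intros chi [[Hh _] [h1 h2]]. rewrite Hh. eapply Rle_lt_trans; [apply Tadd_cont|]. lra.
  - intros v Vv. apply Tplus_iff, Rnot_lt_le. intros h.
    destruct (filter_ne HF (filter_and HF HP
      (proj2 (Hc v) (Rminus (tdist (chi0 v) T0) (Rinv 4)) ltac:(lra)))) as [chi [[_ HPc] h1]].
    pose proof (proj1 (Tplus_iff _) (HPc v Vv)).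
    pose proof (td_tri (chi0 v) (chi v) T0). rewrite (td_sym (chi0 v) (chi v)) in H0. lra.
Qed.

Lemma Tconv_eventually_eq {X : Type} (F : set (set X)) (f g : X -> T) t :
  is_filter F -> F (fun p => f p = g p) -> Tconv (fmap f F) t -> Tconv (fmap g F) t.
Proof.
  intros HF E [_ H]. split; [apply fmap_filter, HF|]. intros eps He.
  apply (filter_mono HF (filter_and HF E (H eps He))). intros p [-> h]. exact h.
Qed.

Definition slice_characters {G H L : zmodType} (u : G * H -> L) (V : set L) (K : set H)
  : set (G -> T) :=
  fun psi => exists chi b, polar V chi /\ K b /\ psi = fun x => chi (u (x, b)).

(* For compact K, these form a compact subset of Gamma_s G: the ultrafilter
   limits of chi and of b are combined by the joint continuity of evaluation. *)
Lemma slice_characters_compact {G H L : zmodType} (cG : convergence G) (cH : convergence H)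
  (op : set (set L)) (u : G * H -> L) (V : set L) (K : set H) :
  is_top_group op -> nbhd op 0 V -> bihom u -> sep_continuous cG cH (top_conv op) u ->
  compact_in cH K -> compact_Gamma_s cG (slice_characters u V K).
Proof.
  intros Htg HV Hb [HsH HsG] HK. split.
  - intros psi [chi [b [Hc [Kb ->]]]]. split.
    + intros x1 x2. rewrite (proj1 Hb). apply (proj1 Hc).
    + intros F x Hx. exact (polar_continuous Htg HV Hc (HsG b F x Hx)).
  - intros U HU HM. pose proof (proj1 HU) as HF.
    destruct (ClassicalEpsilon.choice (fun psi (p : (L -> T) * H) =>
        slice_characters u V K psi ->
        polar V p.1 /\ K p.2 /\ psi = fun x => p.1 (u (x, p.2)))) as [sel Hsel].
    { intros psi. destruct (classic (slice_characters u V K psi)) as [[chi [b Hpsi]]|N].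
      - exists (chi, b). auto.
      - exists (fun _ => T0, 0). intros M. contradiction. }
    have Hsel1 : fmap (fun psi => (sel psi).1) U (polar V).
    { apply (filter_mono HF HM). intros psi h. apply (Hsel _ h). }
    have Hsel2 : fmap (fun psi => (sel psi).2) U K.
    { apply (filter_mono HF HM). intros psi h. apply (Hsel _ h). }
    destruct (polar_compact (fmap_ultra _ HU) Hsel1) as [chi0 [Pc0 Hchi0]].
    destruct (HK _ (fmap_ultra _ HU) Hsel2) as [b0 [Kb0 Hb0]].
    exists (fun x => chi0 (u (x, b0))). split; [exists chi0, b0; auto|].
    split; [exact HF|]. intros x.
    apply (Tconv_eventually_eq (f := fun psi => (sel psi).1 (u (x, (sel psi).2))) HF).
    { apply (filter_mono HF HM). intros psi h. destruct (Hsel psi h) as [_ [_ E]].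
      by rewrite [in RHS]E. }
    exact (polar_eval_conv Htg HV HF Hsel1 Hchi0 (HsH x _ _ Hb0)).
Qed.

(* Indeed the slice characters form an
   equicontinuous set, so they are uniformly small on some A, and a point
   u (a, b) outside V would be separated from V by a character in its polar. *)
Lemma uniform_on_compact {G H L : zmodType} (cG : convergence G) (cH : convergence H)
  (op : set (set L)) (u : G * H -> L) (V : set L) (K : set H) (FG : set (set G)) :
  g_barrelled cG -> is_top_group op -> nbhd op 0 V -> quasi_convex op V -> bihom u ->
  sep_continuous cG cH (top_conv op) u -> compact_in cH K -> cG FG 0 ->
  exists A, FG A /\ forall a b, A a -> K b -> V (u (a, b)).
Proof.
  intros Hgb Htg HV Hq Hb Hs HK HFG.
  have Hequi := Hgb _ (slice_characters_compact Htg HV Hb Hs HK) FG HFG (Rinv 4) ltac:(lra).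
  destruct Hequi as [A [HA Hsmall]]. exists A. split; [exact HA|].
  intros a b Aa Kb. apply NNPP. intros notV.
  destruct (Hq _ notV) as [phi [Hh [_ [HphiV notTplus]]]]. apply notTplus, Tplus_iff.
  have Hslice : slice_characters u V K (fun x => phi (u (x, b))).
  { exists phi, b. repeat split; auto. }
  pose proof (Hsmall _ a Hslice Aa). simpl in *. lra.
Qed.

(* A countable filter base can be taken decreasing: B n = B_0 /\ ... /\ B_n. *)
Lemma decreasing_base {X : Type} (V : set (set X)) :
  is_filter V -> has_countable_base V -> exists B : nat -> set X,
    (forall n, V (B n)) /\ (forall A, V A -> exists n, forall x, B n x -> A x) /\
    (forall n m x, (n <= m)%coq_nat -> B m x -> B n x).
Proof.
  intros HV [B0 [HB0 Hbase]].
  exists (fun n x => forall k, (k <= n)%coq_nat -> B0 k x). split; [|split].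
  - elim=> [|n IH].
    + apply (filter_mono HV (HB0 0%N)). intros x h k hk. by replace k with 0%N by lia.
    + apply (filter_mono HV (filter_and HV IH (HB0 n.+1))). intros x [h1 h2] k hk.
      destruct (Nat.eq_dec k n.+1) as [->|ne]; [exact h2| apply h1; lia].
  - intros A HA. destruct (Hbase A HA) as [n Hn]. exists n. intros x h. apply Hn, h. lia.
  - intros n m x hnm h k hk. apply h. lia.
Qed.

Lemma convergent_sequence_compact {X : Type} (c : convergence X) (VX : set (set X))
  (ys : nat -> X) (B : nat -> set X) y0 :
  is_convergence c -> c VX y0 -> (forall A, VX A -> exists n, forall x, B n x -> A x) ->
  (forall n m x, (n <= m)%coq_nat -> B m x -> B n x) -> (forall n, B n (ys n)) ->
  compact_in c (fun y => y = y0 \/ exists n, y = ys n).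
Proof.
  intros [_ [Hpt [_ Hfin]]] HV Hbase Hdec Hys U [HF HUl] HK.
  destruct (classic (exists z, (z = y0 \/ exists n, z = ys n) /\ U (fun y => y = z)))
    as [[z [Kz Uz]]|Hn].
  - exists z. split; [exact Kz|]. apply (Hfin (point_filter z)); [exact HF| |apply Hpt].
    intros A Az. apply (filter_mono HF Uz). intros y ->. exact Az.
  - exists y0. split; [left; reflexivity|]. apply (Hfin VX); [exact HF| |exact HV].
    have Hoff : forall z, (z = y0 \/ exists n, z = ys n) -> U (fun y => y <> z).
    { intros z Kz. destruct (HUl (fun y => y = z)) as [h|h]; [|exact h].
      exfalso. apply Hn. exists z. auto. }
    have Htail : forall N, U (fun y => forall m, (m < N)%coq_nat -> y <> ys m).
    { elim=> [|N IH].
      - apply (filter_mono HF (filter_true HF)). intros y _ m Hm. lia.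
      - apply (filter_mono HF (filter_and HF IH (Hoff (ys N) (or_intror (ex_intro _ N erefl))))).
        intros y [h1 h2] m Hm. destruct (Nat.eq_dec m N) as [->|ne]; [exact h2|]. apply h1. lia. }
    intros A HA. destruct (Hbase A HA) as [N HN].
    apply (filter_mono HF (filter_and HF HK (filter_and HF (Hoff y0 (or_introl erefl)) (Htail N)))).
    intros y [[->|[n ->]] [h1 h2]]; [exfalso; apply h1; reflexivity|].
    apply HN. destruct (Nat.lt_ge_cases n N) as [l|l].
    + exfalso. exact (h2 n l erefl).
    + exact (Hdec N n _ l (Hys n)).
Qed.

(* In first countable spaces a relation holding uniformly on "A x K" (K
   compact) holds on a box: otherwise pick (a_n, b_n) violating it in the
   n-th basic box; {y0} u {b_n} is compact, and the uniform A catches some a_n. *)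
Lemma box_first_countable {X Y : Type} (cX : convergence X) (cY : convergence Y)
  (P : X -> Y -> Prop) x0 y0 (FX : set (set X)) (FY : set (set Y)) :
  is_convergence cY -> first_countable cX -> first_countable cY ->
  (forall K F, compact_in cY K -> cX F x0 -> exists A, F A /\ forall a b, A a -> K b -> P a b) ->
  cX FX x0 -> cY FY y0 ->
  exists A B, FX A /\ FY B /\ forall a b, A a -> B b -> P a b.
Proof.
  intros HcY HfX HfY Hunif HFX HFY.
  destruct (HfX _ _ HFX) as [VX [HVX [VXFX [cbX cVX]]]].
  destruct (HfY _ _ HFY) as [VY [HVY [VYFY [cbY cVY]]]].
  destruct (decreasing_base HVX cbX) as [BX [HBX [baseX decX]]].
  destruct (decreasing_base HVY cbY) as [BY [HBY [baseY decY]]].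
  apply NNPP. intros Nbox.
  have Hbad : forall n, exists p : X * Y, BX n p.1 /\ BY n p.2 /\ ~ P p.1 p.2.
  { intros n. apply NNPP. intros N. apply Nbox. exists (BX n), (BY n).
    split; [exact (VXFX _ (HBX n))|]. split; [exact (VYFY _ (HBY n))|].
    intros a b ha hb. apply NNPP. intros np. apply N. exists (a, b). auto. }
  destruct (ClassicalEpsilon.choice _ Hbad) as [ps Hps].
  have HK := convergent_sequence_compact (ys := fun n => (ps n).2) HcY cVY baseY decY
    (fun n => proj1 (proj2 (Hps n))).
  destruct (Hunif _ _ HK cVX) as [A [HA HAK]]. destruct (baseX A HA) as [n Hn].
  destruct (Hps n) as [h1 [_ h3]]. apply h3, HAK; [exact (Hn _ h1)|]. right. exists n. reflexivity.
Qed.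

Lemma bihom_continuous_at_zero {G H L : zmodType} (cG : convergence G) (cH : convergence H)
  (op : set (set L)) (u : G * H -> L) (F : set (set (G * H))) :
  is_convergence cH -> g_barrelled cG -> is_top_group op -> locally_quasi_convex op ->
  bihom u -> sep_continuous cG cH (top_conv op) u ->
  (locally_compact cH \/ (first_countable cG /\ first_countable cH)) ->
  is_filter F -> cG (fmap fst F) 0 -> cH (fmap snd F) 0 -> top_conv op (fmap u F) 0.
Proof.
  intros HcH Hgb Htg Hlqc Hb Hs Hcase HF HFG HFH.
  split; [apply fmap_filter, HF|]. intros U oU U0.
  destruct (Hlqc U (nbhd_open oU U0)) as [V [HV [Hq HVU]]].
  have Hunif : forall K FG, compact_in cH K -> cG FG 0 ->
      exists A, FG A /\ forall a b, A a -> K b -> V (u (a, b)).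
  { intros K FG HK HFG'. exact (uniform_on_compact Hgb Htg HV Hq Hb Hs HK HFG'). }
  have [A [B [HA [HB HAB]]]] : exists A B, fmap fst F A /\ fmap snd F B /\
      forall a b, A a -> B b -> V (u (a, b)).
  { destruct Hcase as [[_ Hlc] | [HfG HfH]].
    - destruct (Hlc _ _ HFH) as [K [HK FK]]. destruct (Hunif _ _ HK HFG) as [A [HA HAK]].
      exists A, K. auto.
    - exact (box_first_countable HcH HfG HfH Hunif HFG HFH). }
  apply (filter_mono HF (filter_and HF HA HB)). intros [a b] [ha hb]. apply HVU, HAB; assumption.
Qed.

Lemma bihom_0l {G H L : zmodType} (u : G * H -> L) y : bihom u -> u (0, y) = 0.
Proof.
  intros [Hl _]. apply (addrI (u (0, y))). by rewrite -Hl !addr0.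
Qed.

Lemma bihom_0r {G H L : zmodType} (u : G * H -> L) x : bihom u -> u (x, 0) = 0.
Proof.
  intros [_ Hr]. apply (addrI (u (x, 0))). by rewrite -Hr !addr0.
Qed.

Lemma shift_conv {G : zmodType} {X : Type} (cG : convergence G) (F : set (set X)) (f : X -> G) x :
  is_conv_group cG -> is_filter F -> cG (fmap f F) x -> cG (fmap (fun q => f q - x) F) 0.
Proof.
  intros [[_ [Hpt [_ Hfin]]] Hsub] HF Hx.
  have Hx0 := Hsub _ _ _ _ Hx (Hpt x). rewrite subrr in Hx0.
  apply: (Hfin _ _ _ (fmap_filter _ HF) _ Hx0).
  intros C [A [B [HA [HB HAB]]]]. apply (filter_mono HF HA). intros q hq. exact: HAB.
Qed.

(* Continuity at (0, 0) propagates to every point (x, y) through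
   u (a, b) = u (a - x, b - y) + u (a - x, y) + u (x, b - y) + u (x, y),
   the middle terms being handled by separate continuity. *)
Lemma bihom_continuous_from_zero {G H L : zmodType} (cG : convergence G) (cH : convergence H)
  (op : set (set L)) (u : G * H -> L) :
  is_conv_group cG -> is_conv_group cH -> is_top_group op ->
  bihom u -> sep_continuous cG cH (top_conv op) u ->
  (forall F, is_filter F -> cG (fmap fst F) 0 -> cH (fmap snd F) 0 -> top_conv op (fmap u F) 0) ->
  continuous (prod_conv cG cH) (top_conv op) u.
Proof.
  intros HGg HHg Htg Hb [HsH HsG] Hzero F [x y] [HF [Hx Hy]]. simpl in Hx, Hy.
  set (F0 := fmap (fun q : G * H => (q.1 - x, q.2 - y)) F).
  have Gx : cG (fmap fst F0) 0 := shift_conv HGg HF Hx.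
  have Hy0 : cH (fmap snd F0) 0 := shift_conv HHg HF Hy.
  have T1 := Hzero F0 (fmap_filter _ HF) Gx Hy0.
  have T2 := HsG y _ _ Gx. rewrite /= (bihom_0l y Hb) in T2.
  have T3 := HsH x _ _ Hy0. rewrite /= (bihom_0r x Hb) in T3.
  have T4 := const_conv op (u (x, y)) HF.
  have Tsum := add_conv Htg HF (add_conv Htg HF T1 T2) (add_conv Htg HF T3 T4).
  rewrite !add0r in Tsum. apply: (conv_ext HF _ Tsum).
  intros [a b]. destruct Hb as [Hb1 Hb2]. symmetry.
  by rewrite /= -{1}(subrK x a) -{1}(subrK y b) Hb1 !Hb2.
Qed.

Theorem theorem3p3 (G H L : zmodType) (cG : convergence G) (cH : convergence H)
  (opL : set (set L)) (u : G * H -> L) :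
  is_conv_group cG -> is_conv_group cH -> g_barrelled cG ->
  is_top_group opL -> locally_quasi_convex opL ->
  bihom u -> sep_continuous cG cH (top_conv opL) u ->
  (locally_compact cH \/ (first_countable cG /\ first_countable cH)) ->
  continuous (prod_conv cG cH) (top_conv opL) u.
Proof.
  intros HGg HHg Hgb Htg Hlqc Hb Hs Hcase.
  apply (bihom_continuous_from_zero HGg HHg Htg Hb Hs).
  intros F HF HFG HFH.
  exact (bihom_continuous_at_zero (proj1 HHg) Hgb Htg Hlqc Hb Hs Hcase HF HFG HFH).
Qed.
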